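(* The set of those $A\in\mathcal X$ for which there exist linearly independent $v_1,\dots,v_n\in\mathbb Z^n$ with $\mathcal S_1(A)=\{\pm v_1,\dots,\pm v_n\}$ is dense in $\mathcal X$.
   Context: $S_n=\mathrm{SO}_n\backslash\mathrm{SL}_n\mathbb R$; a point is represented by $A\in\mathrm{SL}_n\mathbb R$ up to left multiplication by $\mathrm{SO}_n$, with its usual topology. $\mathrm{syst}_1(A)=\min_{v\in\mathbb Z^n\setminus\{0\}}|Av|$, $\mathcal S_1(A)=\{v\in\mathbb Z^n:|Av|=\mathrm{syst}_1(A)\}$. $A$ is well-rounded if $\mathcal S_1(A)$ spans $\mathbb R^n$; $\mathcal X\subset S_n$ is the set of well-rounded points. *)

From Stdlib Require Import Reals ZArith Arith List.
Open Scope R_scope.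

(* Vectors in R^n / Z^n are functions nat -> R / nat -> Z, only indices < n matter.
   n x n real matrices are functions nat -> nat -> R (entry (i,j), i,j < n). *)

Fixpoint rsum (n : nat) (f : nat -> R) : R :=
  match n with
  | O => 0
  | S m => rsum m f + f m
  end.

Definition minor0 (M : nat -> nat -> R) (j : nat) : nat -> nat -> R :=
  fun a b => M (S a) (if Nat.ltb b j then b else S b).

Fixpoint det (n : nat) (M : nat -> nat -> R) : R :=
  match n with
  | O => 1
  | S m => rsum (S m) (fun j => (-1) ^ j * M O j * det m (minor0 M j))
  end.

Definition mat_zvec (n : nat) (A : nat -> nat -> R) (v : nat -> Z) : nat -> R :=
  fun i => rsum n (fun j => A i j * IZR (v j)).

Definition norm (n : nat) (x : nat -> R) : R := sqrt (rsum n (fun i => x i ^ 2)).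

Definition znonzero (n : nat) (v : nat -> Z) : Prop := exists k, (k < n)%nat /\ v k <> 0%Z.

Definition in_S1 (n : nat) (A : nat -> nat -> R) (v : nat -> Z) : Prop :=
  znonzero n v /\
  forall w, znonzero n w -> norm n (mat_zvec n A v) <= norm n (mat_zvec n A w).

Definition well_rounded (n : nat) (A : nat -> nat -> R) : Prop :=
  forall x : nat -> R, exists (l : list ((nat -> Z) * R)),
    (forall p, In p l -> in_S1 n A (fst p)) /\
    forall k, (k < n)%nat ->
      x k = fold_right (fun p acc => snd p * IZR (fst p k) + acc) 0 l.

Definition lin_indep (n : nat) (v : nat -> nat -> Z) : Prop :=
  forall c : nat -> R,
    (forall k, (k < n)%nat -> rsum n (fun i => c i * IZR (v i k)) = 0) ->
    forall i, (i < n)%nat -> c i = 0.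

Definition zeq (n : nat) (v w : nat -> Z) : Prop := forall k, (k < n)%nat -> v k = w k.

From Pilot Require Import Defs.
From Stdlib Require Import Reals ZArith Arith List Lra Lia Psatz Classical.
From mathcomp Require all_boot all_algebra Rstruct.
Open Scope R_scope.

(** Let [A] be well rounded with [det A = 1] and [m = |A v|^2] its squared minimum.
    Its shortest vectors span [R^n] and are finitely many, so among the bases
    [v_0, ..., v_{n-1}] of [R^n] made of shortest vectors we may pick one minimising
    [|det (A v_0 | ... | A v_{n-1})|]. By Cramer's rule, every shortest vector [w] then
    has coordinates [c_i(w)] in the basis [A v_j] with [c_i(w) = 0] or [|c_i(w)| >= 1]
    (a "reduced basis").  The perturbation [B0 = A + s sum_i d_i W_i^T (W_i A)], where
    the [W_i] are the rows of the inverse of [(A v_j)_j], satisfies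
    [|B0 w|^2 = |A w|^2 + 2 s sum_i d_i c_i(w)^2 + O(s^2)], and the weights [d_i] are
    chosen so that [|B0 v_j|^2 = m + 2 s] exactly; every other non-zero [w] becomes
    strictly longer. Rescaling [B0] to determinant 1 keeps the shortest vectors and,
    for [s] small, stays [eps]-close to [A] by continuity of [det]. *)

Lemma rsum_ext n f g : (forall i, (i < n)%nat -> f i = g i) -> rsum n f = rsum n g.
Proof.
  induction n as [|n IH]; intros H; simpl; [reflexivity|].
  rewrite IH by (intros; apply H; lia). rewrite H by lia. reflexivity.
Qed.

Lemma rsum_plus n f g : rsum n (fun i => f i + g i) = rsum n f + rsum n g.
Proof. induction n; simpl; [ring|]. rewrite IHn; ring. Qed.

Lemma rsum_scal n c f : rsum n (fun i => c * f i) = c * rsum n f.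
Proof. induction n; simpl; [ring|]. rewrite IHn; ring. Qed.

Lemma rsum_scal_r n c f : rsum n (fun i => f i * c) = rsum n f * c.
Proof. induction n; simpl; [ring|]. rewrite IHn; ring. Qed.

Lemma rsum_const n c : rsum n (fun _ => c) = INR n * c.
Proof. induction n; cbn [rsum]; [simpl; ring|]. rewrite IHn, S_INR; ring. Qed.

Lemma rsum_zero n : rsum n (fun _ => 0) = 0.
Proof. rewrite rsum_const; ring. Qed.

Lemma rsum_opp n f : rsum n (fun i => - f i) = - rsum n f.
Proof. induction n; simpl; [ring|]. rewrite IHn; ring. Qed.

Lemma rsum_minus n f g : rsum n (fun i => f i - g i) = rsum n f - rsum n g.
Proof. unfold Rminus. rewrite rsum_plus, rsum_opp. reflexivity. Qed.

Lemma rsum_swap n m (f : nat -> nat -> R) :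
  rsum n (fun i => rsum m (fun j => f i j)) = rsum m (fun j => rsum n (fun i => f i j)).
Proof.
  induction n; simpl; [symmetry; apply rsum_zero|].
  rewrite IHn, <- rsum_plus. reflexivity.
Qed.

Lemma rsum_shift n g : rsum (S n) g = g 0%nat + rsum n (fun j => g (S j)).
Proof. induction n; cbn [rsum] in *; [ring|]. rewrite IHn. ring. Qed.

Lemma rsum_single n f i : (i < n)%nat -> (forall j, (j < n)%nat -> j <> i -> f j = 0) ->
  rsum n f = f i.
Proof.
  induction n as [|n IH]; intros Hi H; simpl; [lia|].
  destruct (Nat.eq_dec i n) as [->|Hin].
  - rewrite (rsum_ext n f (fun _ => 0)), rsum_zero; [ring|].
    intros j Hj. apply H; lia.
  - rewrite IH by (lia || (intros; apply H; lia)). rewrite (H n) by lia. ring.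
Qed.

Definition delta (i j : nat) : R := if Nat.eqb i j then 1 else 0.

Lemma delta_sym i j : delta i j = delta j i.
Proof. unfold delta. rewrite Nat.eqb_sym. reflexivity. Qed.

Lemma rsum_delta_l n i f : (i < n)%nat -> rsum n (fun j => delta i j * f j) = f i.
Proof.
  intros Hi. rewrite (rsum_single n _ i Hi).
  - unfold delta. rewrite Nat.eqb_refl. ring.
  - intros j _ Hji. unfold delta. destruct (Nat.eqb_spec i j); [lia|ring].
Qed.

Lemma rsum_delta_r n i f : (i < n)%nat -> rsum n (fun j => f j * delta j i) = f i.
Proof.
  intros Hi. rewrite <- (rsum_delta_l n i f Hi).
  apply rsum_ext. intros j _. rewrite delta_sym. ring.
Qed.

Lemma rsum_le n f g : (forall i, (i < n)%nat -> f i <= g i) -> rsum n f <= rsum n g.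
Proof.
  induction n; intros H; simpl; [lra|].
  assert (f n <= g n) by (apply H; lia).
  assert (rsum n f <= rsum n g) by (apply IHn; intros; apply H; lia). lra.
Qed.

Lemma rsum_nonneg n f : (forall i, (i < n)%nat -> 0 <= f i) -> 0 <= rsum n f.
Proof. intros H. rewrite <- (rsum_zero n). apply rsum_le. exact H. Qed.

Lemma rsum_lt n f g : (0 < n)%nat -> (forall i, (i < n)%nat -> f i < g i) ->
  rsum n f < rsum n g.
Proof.
  destruct n as [|n]; intros Hn H; [lia|]. simpl.
  assert (rsum n f <= rsum n g) by (apply rsum_le; intros; left; apply H; lia).
  assert (f n < g n) by (apply H; lia). lra.
Qed.

Lemma rsum_abs n f : Rabs (rsum n f) <= rsum n (fun i => Rabs (f i)).
Proof.
  induction n; simpl; [rewrite Rabs_R0; lra|].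
  eapply Rle_trans; [apply Rabs_triang|]. lra.
Qed.

Lemma rsum_term_le n f i : (forall k, (k < n)%nat -> 0 <= f k) -> (i < n)%nat ->
  f i <= rsum n f.
Proof.
  intros H Hi. rewrite <- (rsum_delta_l n i f Hi). apply rsum_le. intros k Hk.
  specialize (H k Hk). unfold delta. destruct (Nat.eqb_spec i k); lra.
Qed.

Lemma rsum_two_le n f i j : (forall k, (k < n)%nat -> 0 <= f k) ->
  (i < n)%nat -> (j < n)%nat -> i <> j -> f i + f j <= rsum n f.
Proof.
  intros H Hi Hj Hij.
  rewrite <- (rsum_delta_l n i f Hi), <- (rsum_delta_l n j f Hj), <- rsum_plus.
  apply rsum_le. intros k Hk. specialize (H k Hk). unfold delta.
  destruct (Nat.eqb_spec i k), (Nat.eqb_spec j k); subst; try lia; lra.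
Qed.

Inductive in_span (n : nat) (L : list (nat -> R)) : (nat -> R) -> Prop :=
| span_zero : in_span n L (fun _ => 0)
| span_add : forall v c x, In v L -> in_span n L x -> in_span n L (fun k => c * v k + x k)
| span_ext : forall x y, (forall k, (k < n)%nat -> x k = y k) -> in_span n L x -> in_span n L y.

(** Determinants: the Laplace-expansion determinant [det] of [Defs] agrees with the
    MathComp determinant of the corresponding ['M[R]_n] matrix, which gives access to
    multiplicativity, inverses, Cramer's rule and rank theory. *)
Module MatrixBridge.
Import all_boot all_algebra Rstruct.
Import GRing.Theory.
Local Open Scope ring_scope.

Definition mx n (M : nat -> nat -> R) : 'M[R]_n := \matrix_(i < n, j < n) M i j.

Definition nf n (A : 'M[R]_n) : nat -> nat -> R := fun i j =>
  match @insub nat (fun x => (x < n)%N) 'I_n i, @insub nat (fun x => (x < n)%N) 'I_n j with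
  | Some a, Some b => A a b
  | _, _ => 0
  end.
Arguments nf {n}.

Lemma mx_nf n (A : 'M[R]_n) : mx n (nf A) = A.
Proof. by apply/matrixP => i j; rewrite mxE /nf !valK. Qed.

Lemma mx_ext n M N : (forall i j, (i < n)%coq_nat -> (j < n)%coq_nat -> M i j = N i j) ->
  mx n M = mx n N.
Proof. by move=> H; apply/matrixP => i j; rewrite !mxE H //; apply/ltP. Qed.

Lemma rsum_big n f : rsum n f = \sum_(i < n) f i.
Proof. by elim: n => [|n IH] /=; rewrite ?big_ord0 // big_ord_recr /= IH. Qed.

Lemma mx_mul n M N :
  mx n (fun i k => rsum n (fun j => M i j * N j k)) = mx n M *m mx n N.
Proof. by apply/matrixP => i k; rewrite !mxE rsum_big; apply: eq_bigr => j _; rewrite !mxE. Qed.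

Lemma mx_delta n : mx n delta = 1%:M.
Proof.
apply/matrixP => a b; rewrite !mxE /delta.
case: PeanoNat.Nat.eqb_spec => [/val_inj -> | Hab]; first by rewrite eqxx.
by case: eqP => // Eab; case: Hab; rewrite Eab.
Qed.

Lemma pow_expr (x : R) k : pow x k = x ^+ k.
Proof. by elim: k => //= k ->; rewrite exprS. Qed.

Lemma delta_ord n (a b : 'I_n) : delta a b = (1%:M : 'M[R]_n) a b.
Proof. by rewrite -mx_delta mxE. Qed.

Lemma det_mx n M : det n M = \det (mx n M).
Proof.
elim: n M => [|n IH] M; first by rewrite det_mx00.
rewrite [det _ _]/det -/det rsum_big (expand_det_row _ ord0); apply: eq_bigr => j _.
rewrite /cofactor IH !mxE /= add0n.
have -> : mx n (minor0 M j) = row' ord0 (col' j (mx n.+1 M)).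
  apply/matrixP => a b; rewrite !mxE /minor0 /= /bump /=; congr (M _ _).
  by case: (ltnP b j) => H; [move/ltP/PeanoNat.Nat.ltb_lt: H | move/leP/PeanoNat.Nat.ltb_ge: H]
     => ->; rewrite ?add0n ?add1n.
rewrite pow_expr; set a := _ ^+ _; set b := M _ _; set D := \det _.
by change (Rmult (Rmult a b) D = Rmult b (Rmult a D)); ring.
Qed.

Lemma det_ext n M N : (forall i j, (i < n)%coq_nat -> (j < n)%coq_nat -> M i j = N i j) ->
  det n M = det n N.
Proof. by move=> H; rewrite !det_mx (mx_ext n M N H). Qed.

Lemma det_mul n M N :
  det n (fun i k => rsum n (fun j => Rmult (M i j) (N j k))) = Rmult (det n M) (det n N).
Proof. by rewrite !det_mx mx_mul det_mulmx. Qed.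

Lemma det_scale n (c : R) M :
  det n (fun i j => Rmult c (M i j)) = Rmult (pow c n) (det n M).
Proof.
rewrite !det_mx pow_expr; transitivity (c ^+ n * \det (mx n M)); last by [].
by rewrite -detZ; congr (\det _); apply/matrixP => i j; rewrite !mxE.
Qed.

Lemma det_inv n M : det n M <> 0%R -> exists Mi, and
  (forall i k, (i < n)%coq_nat -> (k < n)%coq_nat ->
     rsum n (fun j => Rmult (Mi i j) (M j k)) = delta i k)
  (forall i k, (i < n)%coq_nat -> (k < n)%coq_nat ->
     rsum n (fun j => Rmult (M i j) (Mi j k)) = delta i k).
Proof.
move=> H; have U : mx n M \in unitmx by rewrite unitmxE unitfE -det_mx; apply/eqP.
have entry P Q i k : mx n P *m mx n Q = 1%:M -> (i < n)%coq_nat -> (k < n)%coq_nat ->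
    rsum n (fun j => Rmult (P i j) (Q j k)) = delta i k.
  move=> E /ltP Hi /ltP Hk.
  have := congr1 (fun X : 'M[R]_n => X (Ordinal Hi) (Ordinal Hk)) E.
  by rewrite -mx_mul -mx_delta !mxE.
exists (nf (invmx (mx n M))); split => i k.
- by apply: entry; rewrite mx_nf mulVmx.
- by apply: entry; rewrite mx_nf mulmxV.
Qed.

Lemma det_identity_column n (c : nat -> R) i : (i < n)%coq_nat ->
  det n (fun l j => if Nat.eqb j i then c l else delta l j) = c i.
Proof.
case: n => [|n] /ltP Hi //; pose a := Ordinal Hi.
rewrite det_mx (expand_det_row _ a) (bigD1 a) //= big1 ?addr0.
- rewrite !mxE /= PeanoNat.Nat.eqb_refl /cofactor -signr_odd oddD addbb expr0 mul1r.
  suff -> : row' a (col' a (mx n.+1 (fun l j => if Nat.eqb j i then c l else delta l j)))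
            = 1%:M by rewrite det1 mulr1.
  apply/matrixP => p q; rewrite !mxE.
  have -> : Nat.eqb (lift a q) i = false.
    by apply/PeanoNat.Nat.eqb_neq => Eq; move/eqP: (neq_lift a q); apply; apply: val_inj.
  by rewrite delta_ord mxE (inj_eq (@lift_inj _ a)).
- move=> j Hj; rewrite !mxE /=.
  have Hji : (j : nat) <> i by move=> Eq; move/eqP: Hj; apply; apply: val_inj.
  move/PeanoNat.Nat.eqb_neq: (Hji) => ->.
  by rewrite /delta; move/PeanoNat.Nat.eqb_neq: (nesym Hji) => ->; rewrite mul0r.
Qed.

Lemma det_replace n Y (c : nat -> R) i : (i < n)%coq_nat ->
  det n (fun k j => if Nat.eqb j i then rsum n (fun l => Rmult (Y k l) (c l)) else Y k j)
  = Rmult (c i) (det n Y).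
Proof.
move=> Hi; pose E l j := if Nat.eqb j i then c l else delta l j.
rewrite (det_ext n _ (fun k j => rsum n (fun l => Rmult (Y k l) (E l j)))); last first.
  move=> k j Hk Hj; rewrite /E; case: PeanoNat.Nat.eqb => //.
  by rewrite (rsum_delta_r n j (fun l => Y k l)).
by rewrite det_mul Rmult_comm det_identity_column.
Qed.

Lemma size_length T (l : list T) : size l = length l.
Proof. by elim: l => //= x l ->. Qed.

Lemma span_det n (L : list (nat -> R)) : (forall x, in_span n L x) ->
  exists f : nat -> nat, and (forall j, (j < n)%coq_nat -> (f j < length L)%coq_nat)
    (det n (fun k j => List.nth (f j) L (fun _ => R0) k) <> R0).
Proof.
move=> Hsp.
pose M : 'M[R]_(size L, n) := \matrix_(p, k) List.nth p L (fun _ => 0%R) k.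
have Hrow x : in_span n L x -> (\row_(k < n) x k <= M)%MS.
  elim => {x} [|v c x Hv _ IH|x y Hxy _ IH].
  - by rewrite (_ : \row__ _ = 0) ?sub0mx //; apply/rowP => k; rewrite !mxE.
  - have [p [/ltP Hp Hnth]] := In_nth L v (fun _ => 0%R) Hv.
    rewrite -size_length in Hp.
    rewrite (_ : \row__ _ = c *: row (Ordinal Hp) M + \row_(k < n) x k).
      by apply: addmx_sub => //; apply/scalemx_sub/row_sub.
    by apply/rowP => k; rewrite !mxE /= Hnth.
  - by rewrite (_ : \row__ _ = \row_(k < n) x k) //; apply/rowP => k; rewrite !mxE Hxy //; apply/ltP.
have Hfull : row_full M.
  rewrite -sub1mx; apply/row_subP => k.
  rewrite (_ : row k 1%:M = \row_(j < n) delta k j); first exact: Hrow.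
  by apply/rowP => j; rewrite !mxE delta_ord mxE.
pose f' := fullrankfun Hfull.
pose f j := if @insub nat (fun x => (x < n)%N) 'I_n j is Some a then val (f' a) else 0%N.
exists f; split.
- move=> j /ltP Hj; rewrite /f (insubT (fun x => (x < n)%N) Hj) /=.
  by apply/ltP; rewrite -size_length.
- rewrite det_mx (_ : mx n _ = (rowsub f' M)^T); last first.
    apply/matrixP => k j; rewrite !mxE /f (insubT (fun x => (x < n)%N) (ltn_ord j)) /=.
    by rewrite (_ : Sub (j : nat) (ltn_ord j) = j) //; apply: val_inj.
  by move: (fullrowsub_unit Hfull); rewrite unitmxE unitfE -det_tr => /eqP.
Qed.
End MatrixBridge.
Import MatrixBridge.

Lemma mult_continuous (a b eta : R) : 0 < eta -> exists da db, 0 < da /\ 0 < db /\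
  forall a' b', Rabs (a' - a) < da -> Rabs (b' - b) < db -> Rabs (a' * b' - a * b) < eta.
Proof.
  intros He.
  assert (Ha : 0 < Rabs a + 1) by (pose proof (Rabs_pos a); lra).
  assert (Hb : 0 < Rabs b + 1) by (pose proof (Rabs_pos b); lra).
  exists (eta / (2 * (Rabs b + 1))), (Rmin 1 (eta / (2 * (Rabs a + 1)))).
  split; [apply Rdiv_lt_0_compat; lra|].
  split; [apply Rmin_pos; [lra|apply Rdiv_lt_0_compat; lra]|].
  intros a' b' H1 H2.
  pose proof (Rmin_l 1 (eta / (2 * (Rabs a + 1)))) as Hm1.
  pose proof (Rmin_r 1 (eta / (2 * (Rabs a + 1)))) as Hm2.
  assert (Hb' : Rabs b' <= Rabs b + 1).
  { pose proof (Rabs_triang (b' - b) b). replace (b' - b + b) with b' in * by ring. lra. }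
  assert (H3 : Rabs (a' - a) * Rabs b' <= eta / (2 * (Rabs b + 1)) * (Rabs b + 1))
    by (apply Rmult_le_compat; auto using Rabs_pos; lra).
  assert (H4 : (Rabs a + 1) * Rabs (b' - b) <= (Rabs a + 1) * (eta / (2 * (Rabs a + 1))))
    by (apply Rmult_le_compat_l; lra).
  replace (eta / (2 * (Rabs b + 1)) * (Rabs b + 1)) with (eta / 2) in H3 by (field; lra).
  replace ((Rabs a + 1) * (eta / (2 * (Rabs a + 1)))) with (eta / 2) in H4 by (field; lra).
  replace (a' * b' - a * b) with ((a' - a) * b' + a * (b' - b)) by ring.
  eapply Rle_lt_trans; [apply Rabs_triang|]. rewrite !Rabs_mult.
  pose proof (Rabs_pos (b' - b)). nra.
Qed.

Lemma finite_threshold m (P : nat -> R -> Prop) :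
  (forall j d d', 0 < d' <= d -> P j d -> P j d') ->
  (forall j, (j < m)%nat -> exists d, 0 < d /\ P j d) ->
  exists d, 0 < d /\ forall j, (j < m)%nat -> P j d.
Proof.
  intros Hmono. induction m as [|m IH]; intros H.
  - exists 1. split; [lra|intros; lia].
  - destruct IH as [d1 [Hd1 H1]]; [intros; apply H; lia|].
    destruct (H m) as [d2 [Hd2 H2]]; [lia|].
    pose proof (Rmin_l d1 d2). pose proof (Rmin_r d1 d2). pose proof (Rmin_pos d1 d2 Hd1 Hd2).
    exists (Rmin d1 d2). split; [assumption|]. intros j Hj.
    destruct (Nat.eq_dec j m) as [->|Hjm].
    + apply (Hmono m d2); [lra|exact H2].
    + apply (Hmono j d1); [lra|]. apply H1. lia.
Qed.

Lemma det_continuous n : forall M eta, 0 < eta -> exists del, 0 < del /\ forall N,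
  (forall i j, (i < n)%nat -> (j < n)%nat -> Rabs (N i j - M i j) < del) ->
  Rabs (det n N - det n M) < eta.
Proof.
  induction n as [|n IH]; intros M eta He.
  - exists 1. split; [lra|]. intros N _. simpl. rewrite Rminus_diag, Rabs_R0. lra.
  - set (e := eta / INR (S n)).
    assert (He' : 0 < e) by (apply Rdiv_lt_0_compat; [lra|apply lt_0_INR; lia]).
    set (term := fun (N : nat -> nat -> R) j => (-1) ^ j * N 0%nat j * det n (minor0 N j)).
    destruct (finite_threshold (S n) (fun j d => forall N,
       (forall i k, (i < S n)%nat -> (k < S n)%nat -> Rabs (N i k - M i k) < d) ->
       Rabs (term N j - term M j) < e)) as [d [Hd HP]].
    + intros j d d' Hdd HPj N HN. apply HPj. intros i k Hi Hk.
      specialize (HN i k Hi Hk). lra.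
    + intros j Hj.
      destruct (mult_continuous (M 0%nat j) (det n (minor0 M j)) e He')
        as [da [db [Hda [Hdb Hab]]]].
      destruct (IH (minor0 M j) db Hdb) as [dd [Hdd Hmin]].
      pose proof (Rmin_l da dd). pose proof (Rmin_r da dd).
      exists (Rmin da dd). split; [apply Rmin_pos; assumption|]. intros N HN.
      unfold term. rewrite !Rmult_assoc, <- Rmult_minus_distr_l, Rabs_mult, pow_1_abs, Rmult_1_l.
      apply Hab.
      * specialize (HN 0%nat j ltac:(lia) Hj). lra.
      * apply Hmin. intros a b Ha Hb. unfold minor0.
        assert (Hb' : ((if Nat.ltb b j then b else S b) < S n)%nat)
          by (destruct (Nat.ltb b j); lia).
        specialize (HN (S a) _ ltac:(lia) Hb'). lra.
    + exists d. split; [assumption|]. intros N HN. cbn [det].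
      fold (term N). fold (term M). rewrite <- rsum_minus.
      eapply Rle_lt_trans; [apply rsum_abs|].
      apply Rlt_le_trans with (rsum (S n) (fun _ => e)).
      * apply rsum_lt; [lia|]. intros j Hj. apply (HP j Hj N HN).
      * right. rewrite rsum_const. unfold e. field. apply not_0_INR. lia.
Qed.

Definition dot (n : nat) (x y : nat -> R) : R := rsum n (fun k => x k * y k).
Definition sq (n : nat) (x : nat -> R) : R := dot n x x.
Definition matvec (n : nat) (M : nat -> nat -> R) (x : nat -> R) : nat -> R :=
  fun i => rsum n (fun j => M i j * x j).

Lemma sq_nonneg n x : 0 <= sq n x.
Proof. apply rsum_nonneg. intros. nra. Qed.

Lemma sq_ext n x y : (forall k, (k < n)%nat -> x k = y k) -> sq n x = sq n y.
Proof. intros H. apply rsum_ext. intros k Hk. rewrite H by exact Hk. reflexivity. Qed.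

Lemma sq_scal n c x : sq n (fun k => c * x k) = c ^ 2 * sq n x.
Proof. unfold sq, dot. rewrite <- rsum_scal. apply rsum_ext. intros. ring. Qed.

Lemma sq_add n x z s :
  sq n (fun k => x k + s * z k) = sq n x + 2 * s * dot n x z + s ^ 2 * sq n z.
Proof. unfold sq, dot. rewrite <- !rsum_scal, <- !rsum_plus. apply rsum_ext. intros. ring. Qed.

Lemma norm_sq n x : norm n x = sqrt (sq n x).
Proof. unfold norm, sq, dot. f_equal. apply rsum_ext. intros. ring. Qed.

Lemma norm_le_iff n x y : norm n x <= norm n y <-> sq n x <= sq n y.
Proof.
  rewrite !norm_sq. split; intros H.
  - apply sqrt_le_0; auto using sq_nonneg.
  - apply sqrt_le_1_alt; exact H.
Qed.

Lemma sq_eq0 n x : sq n x = 0 -> forall k, (k < n)%nat -> x k = 0.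
Proof.
  intros H k Hk.
  assert (x k * x k <= 0).
  { rewrite <- H. apply (rsum_term_le n (fun k => x k * x k)); [intros; nra|exact Hk]. }
  nra.
Qed.

Lemma coord_le_norm n x k : (k < n)%nat -> Rabs (x k) <= sqrt (sq n x).
Proof.
  intros Hk. rewrite <- sqrt_Rsqr_abs. apply sqrt_le_1_alt. unfold Rsqr.
  apply (rsum_term_le n (fun k => x k * x k)); [intros; nra|exact Hk].
Qed.

Lemma matvec_inv n M N x i :
  (forall i k, (i < n)%nat -> (k < n)%nat -> rsum n (fun j => M i j * N j k) = delta i k) ->
  (i < n)%nat -> matvec n M (matvec n N x) i = x i.
Proof.
  intros H Hi. unfold matvec.
  transitivity (rsum n (fun j => rsum n (fun l => M i l * N l j) * x j)).
  - rewrite (rsum_ext n _ (fun l => rsum n (fun j => M i l * N l j * x j))).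
    + rewrite rsum_swap. apply rsum_ext. intros j _. rewrite rsum_scal_r. reflexivity.
    + intros l _. rewrite <- rsum_scal. apply rsum_ext. intros. ring.
  - rewrite (rsum_ext n _ (fun j => delta i j * x j)) by (intros j Hj; rewrite H; auto).
    apply rsum_delta_l. exact Hi.
Qed.

Lemma mat_zvec_zeq n M w w' : zeq n w w' -> forall k, mat_zvec n M w k = mat_zvec n M w' k.
Proof. intros H k. apply rsum_ext. intros j Hj. rewrite H by exact Hj. reflexivity. Qed.

Lemma sq_zeq n M w w' : zeq n w w' -> sq n (mat_zvec n M w) = sq n (mat_zvec n M w').
Proof. intros H. apply sq_ext. intros k _. apply mat_zvec_zeq. exact H. Qed.

Lemma znonzero_zeq n w w' : zeq n w w' -> znonzero n w -> znonzero n w'.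
Proof. intros H [k [Hk Hw]]. exists k. split; [exact Hk|]. rewrite <- H; assumption. Qed.

Lemma mat_zvec_opp n M w k : mat_zvec n M (fun i => (- w i)%Z) k = - mat_zvec n M w k.
Proof. unfold mat_zvec. rewrite <- rsum_opp. apply rsum_ext. intros. rewrite opp_IZR. ring. Qed.

Lemma in_S1_iff n M v0 : in_S1 n M v0 ->
  (forall w, znonzero n w -> sq n (mat_zvec n M v0) <= sq n (mat_zvec n M w)) /\
  (forall w, in_S1 n M w <-> znonzero n w /\ sq n (mat_zvec n M w) = sq n (mat_zvec n M v0)).
Proof.
  intros [Hnz Hmin]. split.
  - intros w Hw. apply norm_le_iff. auto.
  - intros w. split.
    + intros [Hw Hwm]. split; [exact Hw|]. apply Rle_antisym; apply norm_le_iff; auto.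
    + intros [Hw Heq]. split; [exact Hw|]. intros w' Hw'. apply norm_le_iff.
      rewrite Heq. apply norm_le_iff. auto.
Qed.

Definition zr (w : nat -> Z) : nat -> R := fun k => IZR (w k).

Lemma zvec_recover n A Ai w k :
  (forall i k, (i < n)%nat -> (k < n)%nat -> rsum n (fun j => Ai i j * A j k) = delta i k) ->
  (k < n)%nat -> IZR (w k) = matvec n Ai (mat_zvec n A w) k.
Proof. intros H Hk. symmetry. exact (matvec_inv n Ai A (zr w) k H Hk). Qed.

Lemma image_injective n A w w' : det n A <> 0 ->
  (forall k, (k < n)%nat -> mat_zvec n A w k = mat_zvec n A w' k) -> zeq n w w'.
Proof.
  intros HA H k Hk. destruct (det_inv n A HA) as [Ai [HAiA _]].
  apply eq_IZR. rewrite (zvec_recover n A Ai w k HAiA Hk), (zvec_recover n A Ai w' k HAiA Hk).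
  apply rsum_ext. intros l Hl. rewrite H by exact Hl. reflexivity.
Qed.

Lemma image_sq_pos n A w : det n A <> 0 -> znonzero n w -> 0 < sq n (mat_zvec n A w).
Proof.
  intros HA [k [Hk Hw]]. destruct (sq_nonneg n (mat_zvec n A w)) as [|E]; [assumption|].
  exfalso. apply Hw.
  apply (image_injective n A w (fun _ => 0%Z) HA); [|exact Hk].
  intros l Hl. rewrite (sq_eq0 n _ (eq_sym E) l Hl). unfold mat_zvec.
  rewrite (rsum_ext n _ (fun _ => 0)); [symmetry; apply rsum_zero|intros; ring].
Qed.

Lemma image_bound n A (r : R) : det n A <> 0 -> exists N : nat, forall w,
  sq n (mat_zvec n A w) <= r -> forall k, (k < n)%nat -> (Z.abs (w k) <= Z.of_nat N)%Z.
Proof.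
  intros HA. destruct (det_inv n A HA) as [Ai [HAiA _]].
  set (K := rsum n (fun k => rsum n (fun l => Rabs (Ai k l)))).
  assert (HK : forall k, (k < n)%nat -> rsum n (fun l => Rabs (Ai k l)) <= K).
  { intros k Hk. apply (rsum_term_le n (fun k => rsum n (fun l => Rabs (Ai k l)))); [|exact Hk].
    intros. apply rsum_nonneg. intros. apply Rabs_pos. }
  assert (HK0 : 0 <= K) by (apply rsum_nonneg; intros; apply rsum_nonneg; intros; apply Rabs_pos).
  destruct (archimed (K * sqrt (Rmax r 0))) as [Hup _].
  exists (Z.to_nat (up (K * sqrt (Rmax r 0)))). intros w Hw k Hk.
  assert (Hsq : sqrt (sq n (mat_zvec n A w)) <= sqrt (Rmax r 0))
    by (apply sqrt_le_1_alt; pose proof (Rmax_l r 0); lra).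
  assert (Hwk : Rabs (IZR (w k)) <= K * sqrt (Rmax r 0)).
  { rewrite (zvec_recover n A Ai w k HAiA Hk). unfold matvec.
    eapply Rle_trans; [apply rsum_abs|].
    apply Rle_trans with (rsum n (fun l => Rabs (Ai k l)) * sqrt (Rmax r 0)).
    - rewrite <- rsum_scal_r. apply rsum_le. intros l Hl. rewrite Rabs_mult.
      apply Rmult_le_compat_l; [apply Rabs_pos|].
      eapply Rle_trans; [apply coord_le_norm; exact Hl|exact Hsq].
    - apply Rmult_le_compat_r; [apply sqrt_pos|apply HK; exact Hk]. }
  rewrite <- abs_IZR in Hwk.
  assert (IZR (Z.abs (w k)) < IZR (up (K * sqrt (Rmax r 0)))) by lra.
  apply lt_IZR in H. lia.
Qed.

Definition upd (w : nat -> Z) (n : nat) (z : Z) : nat -> Z :=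
  fun k => if Nat.eqb k n then z else w k.
Definition zrange (N : nat) : list Z :=
  map (fun i => (Z.of_nat i - Z.of_nat N)%Z) (seq 0 (2 * N + 1)).
Fixpoint zbox (n N : nat) : list (nat -> Z) :=
  match n with
  | O => (fun _ => 0%Z) :: nil
  | S m => flat_map (fun w => map (upd w m) (zrange N)) (zbox m N)
  end.

Lemma zbox_complete n N w : (forall k, (k < n)%nat -> (Z.abs (w k) <= Z.of_nat N)%Z) ->
  exists w', In w' (zbox n N) /\ zeq n w w'.
Proof.
  revert w. induction n as [|n IH]; intros w H.
  - exists (fun _ => 0%Z). split; [left; reflexivity|intros k Hk; lia].
  - destruct (IH w) as [w' [Hin Heq]]; [intros; apply H; lia|].
    exists (upd w' n (w n)). split.
    + apply in_flat_map. exists w'. split; [exact Hin|]. apply in_map.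
      apply in_map_iff. exists (Z.to_nat (w n + Z.of_nat N)).
      specialize (H n ltac:(lia)). split; [lia|]. apply in_seq. lia.
    + intros k Hk. unfold upd. destruct (Nat.eqb_spec k n) as [->|]; [reflexivity|].
      apply Heq. lia.
Qed.

Lemma finite_short_vectors n A r : det n A <> 0 -> exists Box : list (nat -> Z),
  forall w, sq n (mat_zvec n A w) <= r -> exists w', In w' Box /\ zeq n w w'.
Proof.
  intros HA. destruct (image_bound n A r HA) as [N HN].
  exists (zbox n N). intros w Hw. apply zbox_complete. apply HN. exact Hw.
Qed.

Lemma list_filter_ex {T} (l : list T) (P : T -> Prop) :
  exists l', forall x, In x l' <-> In x l /\ P x.
Proof.
  induction l as [|a l [l' H]].
  - exists nil. intros x. simpl. tauto.
  - destruct (classic (P a)) as [Ha|Ha].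
    + exists (a :: l'). intros x. simpl. rewrite H.
      split; [intros [<-|Hx]|intros [[<-|Hx] Hp]]; tauto.
    + exists l'. intros x. simpl. rewrite H.
      split; [|intros [[<-|Hx] Hp]]; tauto.
Qed.

Lemma list_gap {T} (l : list T) (f : T -> R) (m : R) :
  exists m2, m < m2 /\ m2 <= m + 1 /\ forall x, In x l -> m < f x -> m2 <= f x.
Proof.
  induction l as [|a l [m2 [H1 [H2 H3]]]].
  - exists (m + 1). split; [lra|split; [lra|]]. intros x [].
  - destruct (Rlt_dec m (f a)).
    + exists (Rmin m2 (f a)). pose proof (Rmin_l m2 (f a)). pose proof (Rmin_r m2 (f a)).
      split; [apply Rmin_glb_lt; assumption|split; [lra|]].
      intros x [<-|Hx] Hfx; [lra|]. specialize (H3 x Hx Hfx). lra.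
    + exists m2. split; [exact H1|split; [exact H2|]].
      intros x [<-|Hx] Hfx; [lra|auto].
Qed.

Lemma S1_finite n A v0 : det n A <> 0 -> in_S1 n A v0 -> exists Lz : list (nat -> Z),
  (forall w, In w Lz -> in_S1 n A w) /\
  (forall w, in_S1 n A w -> exists w', In w' Lz /\ zeq n w w').
Proof.
  intros HA Hv0. destruct (in_S1_iff n A v0 Hv0) as [_ HS1].
  destruct (finite_short_vectors n A (sq n (mat_zvec n A v0)) HA) as [Box HBox].
  destruct (list_filter_ex Box (in_S1 n A)) as [Lz HLz].
  exists Lz. split; [intros w Hw; apply HLz, Hw|].
  intros w Hw. apply HS1 in Hw as [Hnz Hm].
  destruct (HBox w ltac:(lra)) as [w' [Hin Heq]].
  exists w'. split; [|exact Heq]. apply HLz. split; [exact Hin|].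
  apply HS1. split; [exact (znonzero_zeq n w w' Heq Hnz)|].
  rewrite <- (sq_zeq n A w w' Heq). exact Hm.
Qed.

Lemma norm_gap n A v0 : det n A <> 0 -> in_S1 n A v0 ->
  exists m2, sq n (mat_zvec n A v0) < m2 /\ forall w, znonzero n w ->
    sq n (mat_zvec n A w) <> sq n (mat_zvec n A v0) -> m2 <= sq n (mat_zvec n A w).
Proof.
  intros HA Hv0. destruct (in_S1_iff n A v0 Hv0) as [Hmin _].
  set (m := sq n (mat_zvec n A v0)).
  destruct (finite_short_vectors n A (m + 1) HA) as [Box HBox].
  destruct (list_gap Box (fun w => sq n (mat_zvec n A w)) m) as [m2 [Hm2 [Hm21 Hgap]]].
  exists m2. split; [exact Hm2|]. intros w Hw Hne.
  assert (m < sq n (mat_zvec n A w)) by (specialize (Hmin w Hw); fold m in Hmin; lra).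
  destruct (Rle_dec (sq n (mat_zvec n A w)) (m + 1)) as [Hle|]; [|lra].
  destruct (HBox w Hle) as [w' [Hin Heq]].
  rewrite (sq_zeq n A w w' Heq) in *. apply Hgap; assumption.
Qed.

Definition select (L : list (nat -> R)) (t : nat -> nat) : nat -> nat -> R :=
  fun k j => nth (t j) L (fun _ => 0) k.

Definition valid_selection (n len : nat) (t : nat -> nat) : Prop :=
  forall j, (j < n)%nat -> (t j < len)%nat.

Fixpoint selections (n len : nat) : list (nat -> nat) :=
  match n with
  | O => (fun _ => O) :: nil
  | S m => flat_map (fun t => map (fun p j => if Nat.eqb j m then p else t j) (seq 0 len))
             (selections m len)
  end.

Lemma selections_complete n len t : valid_selection n len t ->
  exists t', In t' (selections n len) /\ forall j, (j < n)%nat -> t' j = t j.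
Proof.
  revert t. induction n as [|n IH]; intros t H.
  - exists (fun _ => O). split; [left; reflexivity|intros; lia].
  - destruct (IH t) as [t' [Hin Heq]]; [intros j Hj; apply H; lia|].
    exists (fun j => if Nat.eqb j n then t n else t' j). split.
    + apply in_flat_map. exists t'. split; [exact Hin|].
      apply (in_map (fun p j => if Nat.eqb j n then p else t' j)).
      apply in_seq. specialize (H n). lia.
    + intros j Hj. destruct (Nat.eqb_spec j n) as [->|]; [reflexivity|]. apply Heq. lia.
Qed.

Lemma selections_sound n len t : In t (selections n len) -> valid_selection n len t.
Proof.
  revert t. induction n as [|n IH]; intros t Hin j Hj; [lia|].
  apply in_flat_map in Hin as [t0 [Ht0 Hin]].
  apply in_map_iff in Hin as [p [<- Hp]]. apply in_seq in Hp.
  destruct (Nat.eqb_spec j n); [lia|]. apply IH; [exact Ht0|lia].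
Qed.

Lemma list_min {T} (l : list T) (P : T -> Prop) (f : T -> R) :
  (exists x, In x l /\ P x) ->
  exists x, In x l /\ P x /\ forall y, In y l -> P y -> f x <= f y.
Proof.
  induction l as [|a l IH]; intros [x [Hx HP]]; [destruct Hx|].
  destruct (classic (exists x, In x l /\ P x)) as [E|E].
  - destruct (IH E) as [y [Hy [HPy Hmin]]].
    destruct (classic (P a /\ f a < f y)) as [[HPa Hlt]|N].
    + exists a. split; [left; reflexivity|split; [exact HPa|]].
      intros z [<-|Hz] HPz; [lra|]. specialize (Hmin z Hz HPz). lra.
    + exists y. split; [right; exact Hy|split; [exact HPy|]].
      intros z [<-|Hz] HPz; [|auto].
      destruct (Rle_dec (f y) (f a)); [assumption|]. exfalso. apply N. split; [exact HPz|lra].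
  - destruct Hx as [<-|Hx]; [|exfalso; apply E; eauto].
    exists a. split; [left; reflexivity|split; [exact HP|]].
    intros z [<-|Hz] HPz; [lra|]. exfalso. apply E. eauto.
Qed.

Lemma min_det_selection n (L : list (nat -> R)) :
  (exists t, valid_selection n (length L) t /\ det n (select L t) <> 0) ->
  exists t0, valid_selection n (length L) t0 /\ det n (select L t0) <> 0 /\
    forall t, valid_selection n (length L) t -> det n (select L t) <> 0 ->
      Rabs (det n (select L t0)) <= Rabs (det n (select L t)).
Proof.
  intros [t [Ht Hdet]].
  assert (Hrep : forall t, valid_selection n (length L) t -> exists t',
             In t' (selections n (length L)) /\ det n (select L t') = det n (select L t)).
  { intros t1 Ht1. destruct (selections_complete n (length L) t1 Ht1) as [t' [Hin Heq]].
    exists t'. split; [exact Hin|]. apply det_ext. intros k j _ Hj. unfold select.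
    rewrite Heq by exact Hj. reflexivity. }
  destruct (list_min (selections n (length L)) (fun t => det n (select L t) <> 0)
              (fun t => Rabs (det n (select L t)))) as [t0 [Hin0 [Hdet0 Hmin]]].
  { destruct (Hrep t Ht) as [t' [Hin E]]. exists t'. rewrite E. split; assumption. }
  exists t0. split; [exact (selections_sound n _ t0 Hin0)|split; [exact Hdet0|]].
  intros t1 Ht1 Hdet1. destruct (Hrep t1 Ht1) as [t' [Hin E]].
  rewrite <- E. apply Hmin; [exact Hin|]. rewrite E. exact Hdet1.
Qed.

(* For a selection of least [|det|], every member of the family has coordinates of
   absolute value at least 1 (or 0) in the selected basis: by Cramer's rule, the
   selection obtained by swapping in that member has determinant [c_i * det]. *)
Lemma min_selection_coords n (L : list (nat -> R)) t0 W :
  valid_selection n (length L) t0 -> det n (select L t0) <> 0 ->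
  (forall t, valid_selection n (length L) t -> det n (select L t) <> 0 ->
     Rabs (det n (select L t0)) <= Rabs (det n (select L t))) ->
  (forall i k, (i < n)%nat -> (k < n)%nat ->
     rsum n (fun j => select L t0 i j * W j k) = delta i k) ->
  forall x, In x L -> forall i, (i < n)%nat ->
    matvec n W x i <> 0 -> 1 <= Rabs (matvec n W x i).
Proof.
  intros Ht0 Hdet0 Hmin HYW x Hx i Hi Hc.
  destruct (In_nth L x (fun _ => 0) Hx) as [p [Hp Hnth]].
  set (t := fun j => if Nat.eqb j i then p else t0 j).
  assert (Hdet : det n (select L t) = matvec n W x i * det n (select L t0)).
  { rewrite <- (det_replace n (select L t0) (matvec n W x) i Hi). apply det_ext.
    intros k j Hk _. unfold t, select. destruct (Nat.eqb j i); [|reflexivity].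
    rewrite Hnth. symmetry. exact (matvec_inv n (select L t0) W x k HYW Hk). }
  assert (Ht : valid_selection n (length L) t)
    by (intros j Hj; unfold t; destruct (Nat.eqb j i); auto).
  assert (Hne : det n (select L t) <> 0) by (rewrite Hdet; apply Rmult_integral_contrapositive; auto).
  specialize (Hmin t Ht Hne). rewrite Hdet, Rabs_mult in Hmin.
  assert (0 < Rabs (det n (select L t0))) by (apply Rabs_pos_lt; exact Hdet0).
  nra.
Qed.

(** For integer vectors [v_0, ..., v_{n-1}],
    [basis_matrix v] has the [v_j] as columns and [image_matrix n A v] the [A v_j];
    [coord n A W w] are the coordinates of [A w] in the basis [A v_j] when [W] is the
    inverse of [image_matrix n A v]. *)

Definition basis_matrix (v : nat -> nat -> Z) : nat -> nat -> R := fun k j => IZR (v j k).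
Definition image_matrix (n : nat) (A : nat -> nat -> R) (v : nat -> nat -> Z) :
  nat -> nat -> R := fun k j => mat_zvec n A (v j) k.
Definition coord (n : nat) (A W : nat -> nat -> R) (w : nat -> Z) : nat -> R :=
  matvec n W (mat_zvec n A w).

Lemma det_image_matrix n A v : det n (image_matrix n A v) = det n A * det n (basis_matrix v).
Proof. apply det_mul. Qed.

Record reduced_basis (n : nat) (A : nat -> nat -> R) (m m2 : R)
    (v : nat -> nat -> Z) (W : nat -> nat -> R) : Prop := {
  rb_min_pos : 0 < m;
  rb_gap_pos : m < m2;
  rb_min : forall w, znonzero n w -> m <= sq n (mat_zvec n A w);
  rb_gap : forall w, znonzero n w -> sq n (mat_zvec n A w) <> m -> m2 <= sq n (mat_zvec n A w);
  rb_basis_nonzero : forall j, (j < n)%nat -> znonzero n (v j);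
  rb_basis_min : forall j, (j < n)%nat -> sq n (mat_zvec n A (v j)) = m;
  rb_basis_indep : det n (basis_matrix v) <> 0;
  rb_inv_l : forall i k, (i < n)%nat -> (k < n)%nat ->
    rsum n (fun j => W i j * image_matrix n A v j k) = delta i k;
  rb_inv_r : forall i k, (i < n)%nat -> (k < n)%nat ->
    rsum n (fun j => image_matrix n A v i j * W j k) = delta i k;
  rb_coord : forall w, znonzero n w -> sq n (mat_zvec n A w) = m ->
    forall i, (i < n)%nat -> coord n A W w i <> 0 -> 1 <= Rabs (coord n A W w i)
}.

Lemma shortest_vector_exists n A : (0 < n)%nat -> well_rounded n A ->
  exists v0, in_S1 n A v0.
Proof.
  intros Hn HWR. destruct (HWR (fun _ => 1)) as [[|p l] [Hl Hx]].
  - specialize (Hx 0%nat Hn). simpl in Hx. lra.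
  - exists (fst p). apply Hl. left. reflexivity.
Qed.

Lemma S1_list_spans n A (Lz : list (nat -> Z)) : well_rounded n A ->
  (forall w, in_S1 n A w -> exists w', In w' Lz /\ zeq n w w') ->
  forall x, in_span n (map zr Lz) x.
Proof.
  intros HWR HLz x. destruct (HWR x) as [l [Hl Hx]].
  apply (span_ext n _ (fun k => fold_right (fun p acc => snd p * IZR (fst p k) + acc) 0 l));
    [intros k Hk; symmetry; auto|].
  clear Hx. induction l as [|p l IH]; simpl; [apply span_zero|].
  destruct (HLz (fst p)) as [w' [Hw' Heq]]; [apply Hl; left; reflexivity|].
  apply (span_ext n _ (fun k => snd p * zr w' k +
                                fold_right (fun p acc => snd p * IZR (fst p k) + acc) 0 l)).
  { intros k Hk. unfold zr. rewrite Heq by exact Hk. reflexivity. }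
  apply span_add; [apply in_map; exact Hw'|]. apply IH. intros q Hq. apply Hl. right. exact Hq.
Qed.

Lemma select_images n A (Lz : list (nat -> Z)) t k j :
  (t j < length Lz)%nat ->
  select (map (mat_zvec n A) Lz) t k j = mat_zvec n A (nth (t j) Lz (fun _ => 0%Z)) k.
Proof.
  intros H. unfold select.
  rewrite (nth_indep _ _ (mat_zvec n A (fun _ => 0%Z))) by (rewrite length_map; exact H).
  rewrite map_nth. reflexivity.
Qed.

Lemma invertible_image_selection n A (Lz : list (nat -> Z)) : det n A = 1 -> well_rounded n A ->
  (forall w, in_S1 n A w -> exists w', In w' Lz /\ zeq n w w') ->
  exists t, valid_selection n (length (map (mat_zvec n A) Lz)) t /\
    det n (select (map (mat_zvec n A) Lz) t) <> 0.
Proof.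
  intros HdetA HWR HLz.
  destruct (span_det n (map zr Lz) (S1_list_spans n A Lz HWR HLz)) as [f [Hf Hdetf]].
  rewrite length_map in Hf.
  exists f. rewrite length_map. split; [exact Hf|].
  rewrite (det_ext n _ (fun k j => rsum n (fun l => A k l *
             nth (f j) (map zr Lz) (fun _ => 0) l))), det_mul, HdetA, Rmult_1_l; [exact Hdetf|].
  intros k j _ Hj. rewrite select_images by (apply Hf; exact Hj).
  apply rsum_ext. intros l _. rewrite (map_nth zr Lz (fun _ => 0%Z)). reflexivity.
Qed.

Lemma reduced_basis_exists n A : (0 < n)%nat -> det n A = 1 -> well_rounded n A ->
  exists m m2 v W, reduced_basis n A m m2 v W.
Proof.
  intros Hn HdetA HWR.
  assert (HA : det n A <> 0) by lra.
  destruct (shortest_vector_exists n A Hn HWR) as [v0 Hv0].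
  destruct (in_S1_iff n A v0 Hv0) as [Hmin HS1].
  destruct (S1_finite n A v0 HA Hv0) as [Lz [HLzS1 HLz]].
  destruct (norm_gap n A v0 HA Hv0) as [m2 [Hm2 Hgap]].
  set (L := map (mat_zvec n A) Lz).
  assert (HlenL : length L = length Lz) by apply length_map.
  destruct (min_det_selection n L (invertible_image_selection n A Lz HdetA HWR HLz))
    as [t0 [Ht0 [Hdet0 Hmin0]]].
  rewrite HlenL in Ht0, Hmin0.
  set (v := fun j => nth (t0 j) Lz (fun _ => 0%Z)).
  assert (HvS1 : forall j, (j < n)%nat -> in_S1 n A (v j))
    by (intros j Hj; apply HLzS1, nth_In, Ht0, Hj).
  assert (HY : forall k j, (k < n)%nat -> (j < n)%nat -> select L t0 k j = image_matrix n A v k j)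
    by (intros k j _ Hj; apply select_images, Ht0, Hj).
  destruct (det_inv n (select L t0) Hdet0) as [W [HWY HYW]].
  exists (sq n (mat_zvec n A v0)), m2, v, W. split.
  - apply image_sq_pos; [exact HA|apply Hv0].
  - exact Hm2.
  - exact Hmin.
  - exact Hgap.
  - intros j Hj. apply HvS1, Hj.
  - intros j Hj. apply HS1, HvS1, Hj.
  - rewrite (det_ext n _ _ HY), det_image_matrix, HdetA, Rmult_1_l in Hdet0. exact Hdet0.
  - intros i k Hi Hk. rewrite <- (HWY i k Hi Hk). apply rsum_ext. intros j Hj.
    rewrite HY by assumption. reflexivity.
  - intros i k Hi Hk. rewrite <- (HYW i k Hi Hk). apply rsum_ext. intros j Hj.
    rewrite HY by assumption. reflexivity.
  - intros w Hw Hwm i Hi.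
    destruct (HLz w (proj2 (HS1 w) (conj Hw Hwm))) as [w' [Hw' Heq]].
    assert (E : coord n A W w i = matvec n W (mat_zvec n A w') i).
    { apply rsum_ext. intros k _. rewrite (mat_zvec_zeq n A w w' Heq). reflexivity. }
    rewrite E. apply (min_selection_coords n L t0 W); rewrite ?HlenL; auto.
    apply in_map. exact Hw'.
Qed.

Lemma weight_props t : 0 <= t <= 1 ->
  let d := 2 / (1 + sqrt (1 + 2 * t)) in 1/2 < d <= 1 /\ t * d ^ 2 + 2 * d = 2.
Proof.
  intros Ht d.
  set (r := sqrt (1 + 2 * t)) in *.
  assert (Hr2 : r * r = 1 + 2 * t) by (apply sqrt_sqrt; lra).
  assert (Hr1 : 1 <= r) by (rewrite <- sqrt_1; apply sqrt_le_1_alt; lra).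
  assert (Hd : d * (1 + r) = 2) by (unfold d; field; lra).
  split; [split; nra|].
  unfold d. replace t with ((r * r - 1) / 2) by lra. field. lra.
Qed.

Lemma pos_below (a b c : R) : 0 < a -> 0 < b -> 0 < c ->
  exists s, 0 < s /\ s <= a /\ s <= b /\ s <= c.
Proof.
  intros Ha Hb Hc. exists (Rmin a (Rmin b c)).
  pose proof (Rmin_l a (Rmin b c)). pose proof (Rmin_r a (Rmin b c)).
  pose proof (Rmin_l b c). pose proof (Rmin_r b c).
  split; [apply Rmin_pos; [exact Ha|apply Rmin_pos; assumption]|lra].
Qed.

Lemma in_S1_scale n M (lam : R) w : 0 < lam ->
  in_S1 n (fun i j => lam * M i j) w <-> in_S1 n M w.
Proof.
  intros Hlam.
  assert (E : forall u, sq n (mat_zvec n (fun i j => lam * M i j) u) = lam ^ 2 * sq n (mat_zvec n M u)).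
  { intros u. rewrite <- sq_scal. apply sq_ext. intros k _. unfold mat_zvec.
    rewrite <- rsum_scal. apply rsum_ext. intros. ring. }
  assert (Hl2 : 0 < lam ^ 2) by (apply pow_lt; exact Hlam).
  unfold in_S1. split; intros [Hw Hmin]; split; try exact Hw; intros u Hu;
    specialize (Hmin u Hu); apply norm_le_iff; apply norm_le_iff in Hmin;
    rewrite ?E in *; nra.
Qed.

Lemma exp_le x y : x <= y -> exp x <= exp y.
Proof.
  intros [H|H]; [left; apply exp_increasing; exact H|right; rewrite H; reflexivity].
Qed.

(* [x^p] lies between [1] and [x] for [0 < p <= 1]; hence [|x^(1/n) - 1| <= |x - 1|]. *)
Lemma root_closer_to_one x n : 0 < x -> (1 <= n)%nat ->
  Rabs (Rpower x (/ INR n) - 1) <= Rabs (x - 1).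
Proof.
  intros Hx Hn.
  assert (Hp : 0 < / INR n <= 1).
  { split; [apply Rinv_0_lt_compat, lt_0_INR; lia|].
    rewrite <- Rinv_1. apply Rinv_le_contravar; [lra|]. apply (le_INR 1). exact Hn. }
  unfold Rpower.
  destruct (Rle_dec 0 (ln x)).
  - assert (exp 0 <= exp (/ INR n * ln x) <= exp (ln x)) by (split; apply exp_le; nra).
    rewrite exp_0, exp_ln in H by exact Hx. rewrite !Rabs_right by lra. lra.
  - assert (exp (ln x) <= exp (/ INR n * ln x) <= exp 0) by (split; apply exp_le; nra).
    rewrite exp_0, exp_ln in H by exact Hx. rewrite !Rabs_left1 by lra. lra.
Qed.

Lemma normalize_det n M : (1 <= n)%nat -> 1/2 < det n M -> exists lam,
  0 < lam /\ det n (fun i j => lam * M i j) = 1 /\ Rabs (lam - 1) <= 2 * Rabs (det n M - 1).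
Proof.
  intros Hn HM. exists (Rpower (/ det n M) (/ INR n)).
  assert (Hinv : 0 < / det n M) by (apply Rinv_0_lt_compat; lra).
  split; [apply exp_pos|split].
  - rewrite det_scale, <- Rpower_pow by apply exp_pos.
    rewrite Rpower_mult, Rinv_l, Rpower_1 by (exact Hinv || apply not_0_INR; lia).
    field. lra.
  - eapply Rle_trans; [apply root_closer_to_one; assumption|].
    replace (/ det n M - 1) with ((1 - det n M) * / det n M) by (field; lra).
    rewrite Rabs_mult, Rabs_inv, (Rabs_right (det n M)), <- Rabs_Ropp, Ropp_minus_distr by lra.
    assert (/ det n M <= 2) by (rewrite <- (Rinv_inv 2); apply Rinv_le_contravar; lra).
    pose proof (Rabs_pos (det n M - 1)). nra.
Qed.

Definition entry_bound (n : nat) (A : nat -> nat -> R) : R :=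
  1 + rsum n (fun p => rsum n (fun l => Rabs (A p l))).

Lemma entry_bound_ge1 n A : 1 <= entry_bound n A.
Proof.
  unfold entry_bound.
  assert (0 <= rsum n (fun p => rsum n (fun l => Rabs (A p l))))
    by (apply rsum_nonneg; intros; apply rsum_nonneg; intros; apply Rabs_pos).
  lra.
Qed.

Lemma entry_bound_le n A p l : (p < n)%nat -> (l < n)%nat -> Rabs (A p l) <= entry_bound n A - 1.
Proof.
  intros Hp Hl. unfold entry_bound.
  replace (1 + _ - 1) with (rsum n (fun p => rsum n (fun l => Rabs (A p l)))) by ring.
  apply Rle_trans with (rsum n (fun l => Rabs (A p l))).
  - apply (rsum_term_le n (fun l => Rabs (A p l))); [intros; apply Rabs_pos|exact Hl].
  - apply (rsum_term_le n (fun p => rsum n (fun l => Rabs (A p l)))); [|exact Hp].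
    intros. apply rsum_nonneg. intros. apply Rabs_pos.
Qed.

Lemma scaled_close (a b lam K eps : R) : Rabs a <= K - 1 -> Rabs (b - a) <= 1 ->
  Rabs (b - a) < eps / 2 -> Rabs (lam - 1) * K <= eps / 2 -> Rabs (lam * b - a) < eps.
Proof.
  intros Ha Hb1 Hb2 Hlam.
  replace (lam * b - a) with ((lam - 1) * b + (b - a)) by ring.
  eapply Rle_lt_trans; [apply Rabs_triang|]. rewrite Rabs_mult.
  assert (Rabs b <= K).
  { replace b with (a + (b - a)) by ring. eapply Rle_trans; [apply Rabs_triang|]. lra. }
  assert (Rabs (lam - 1) * Rabs b <= Rabs (lam - 1) * K)
    by (apply Rmult_le_compat_l; [apply Rabs_pos|assumption]).
  lra.
Qed.

Lemma lin_indep_of_det n v : det n (basis_matrix v) <> 0 -> lin_indep n v.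
Proof.
  intros Hdet c Hc i Hi. destruct (det_inv n _ Hdet) as [Vi [HViV _]].
  assert (H0 : forall k, (k < n)%nat -> matvec n (basis_matrix v) c k = 0).
  { intros k Hk. rewrite <- (Hc k Hk). apply rsum_ext. intros. apply Rmult_comm. }
  rewrite <- (matvec_inv n Vi (basis_matrix v) c i HViV Hi). unfold matvec at 1.
  rewrite (rsum_ext n _ (fun _ => 0)); [apply rsum_zero|].
  intros k Hk. rewrite H0 by exact Hk. ring.
Qed.

Lemma fold_seq (v : nat -> nat -> Z) (a : nat -> R) k n p :
  fold_right (fun q acc => snd q * IZR (fst q k) + acc) 0 (map (fun j => (v j, a j)) (seq p n))
  = rsum n (fun j => a (p + j)%nat * IZR (v (p + j)%nat k)).
Proof.
  revert p. induction n as [|n IH]; intros p; [reflexivity|].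
  cbn [seq map fold_right fst snd]. rewrite IH, rsum_shift, Nat.add_0_r. f_equal.
  apply rsum_ext. intros j _. rewrite Nat.add_succ_r. reflexivity.
Qed.

(* If a basis of [R^n] consists of shortest vectors of [B], then [B] is well
   rounded: every [x] is the combination [sum_j (V^-1 x)_j v_j]. *)
Lemma well_rounded_of_basis n B v : det n (basis_matrix v) <> 0 ->
  (forall j, (j < n)%nat -> in_S1 n B (v j)) -> well_rounded n B.
Proof.
  intros Hdet Hv x. destruct (det_inv n _ Hdet) as [Vi [_ HVVi]].
  exists (map (fun j => (v j, matvec n Vi x j)) (seq 0 n)). split.
  - intros p Hp. apply in_map_iff in Hp as [j [<- Hj]]. apply in_seq in Hj.
    apply Hv. lia.
  - intros k Hk. rewrite fold_seq. rewrite <- (matvec_inv n (basis_matrix v) Vi x k HVVi Hk).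
    apply rsum_ext. intros j _. apply Rmult_comm.
Qed.

(** Given a reduced basis [v] of shortest vectors of [A], with
    [W = (A v_0 | ... | A v_{n-1})^-1] of rows [W_i], put
    [B0 = A + s * sum_i d_i W_i^T (W_i A)], so that [B0 w = A w + s sum_i d_i c_i(w) W_i]
    where [c(w) = W A w] are the coordinates of [A w] in the basis [A v_j]. Then
    [|B0 w|^2 = |A w|^2 + 2 s sum_i d_i c_i(w)^2 + s^2 |sum_i d_i c_i(w) W_i|^2];
    the weights [d_i] are tuned so that [|B0 v_j|^2 = m + 2 s] exactly. *)

Section Perturbation.
Variables (n : nat) (A W : nat -> nat -> R) (v : nat -> nat -> Z) (m m2 : R).
Hypothesis Hn : (0 < n)%nat.
Hypothesis HdetA : det n A = 1.
Hypothesis Hrb : reduced_basis n A m m2 v W.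

Local Notation c := (coord n A W).

Lemma coord_basis i j : (i < n)%nat -> (j < n)%nat -> c (v j) i = delta i j.
Proof. apply (rb_inv_l _ _ _ _ _ _ Hrb). Qed.

Lemma image_expansion w k : (k < n)%nat ->
  mat_zvec n A w k = rsum n (fun l => mat_zvec n A (v l) k * c w l).
Proof.
  intros Hk. symmetry.
  exact (matvec_inv n (image_matrix n A v) W (mat_zvec n A w) k (rb_inv_r _ _ _ _ _ _ Hrb) Hk).
Qed.

Lemma shortest_vector_coords w : znonzero n w -> sq n (mat_zvec n A w) = m ->
  (exists j, (j < n)%nat /\ (zeq n w (v j) \/ zeq n w (fun k => (- v j k)%Z))) \/
  (exists i j, (i < n)%nat /\ (j < n)%nat /\ i <> j /\ c w i <> 0 /\ c w j <> 0).
Proof.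
  intros Hw Hwm.
  destruct (classic (exists i j, (i < n)%nat /\ (j < n)%nat /\ i <> j /\ c w i <> 0 /\ c w j <> 0))
    as [E|Hno]; [right; exact E|left].
  assert (HA : det n A <> 0) by lra.
  pose proof (rb_min_pos _ _ _ _ _ _ Hrb) as Hm.
  destruct (classic (exists i, (i < n)%nat /\ c w i <> 0)) as [[i [Hi Hci]]|Hall].
  - assert (Hcol : forall k, (k < n)%nat -> mat_zvec n A w k = c w i * mat_zvec n A (v i) k).
    { intros k Hk. rewrite image_expansion by exact Hk.
      rewrite (rsum_single n _ i Hi); [ring|].
      intros j Hj Hji. destruct (Req_dec (c w j) 0) as [->|Hcj]; [ring|].
      exfalso. apply Hno. exists i, j. auto. }
    assert (Hsq : m = c w i ^ 2 * m).
    { rewrite <- Hwm at 1. rewrite <- (rb_basis_min _ _ _ _ _ _ Hrb i Hi), <- sq_scal.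
      apply sq_ext. exact Hcol. }
    assert (Hc2 : (c w i - 1) * (c w i + 1) = 0) by nra.
    exists i. split; [exact Hi|].
    apply Rmult_integral in Hc2 as [E|E]; [left|right]; apply (image_injective n A _ _ HA);
      intros k Hk; rewrite Hcol by exact Hk; rewrite ?mat_zvec_opp.
    + replace (c w i) with 1 by lra. ring.
    + replace (c w i) with (-1) by lra. ring.
  - exfalso.
    assert (Hsq0 : sq n (mat_zvec n A w) = 0).
    { unfold sq, dot. rewrite (rsum_ext n _ (fun _ => 0)); [apply rsum_zero|].
      intros k Hk. rewrite image_expansion, (rsum_ext n _ (fun _ => 0)), rsum_zero by
        (exact Hk || (intros l Hl; destruct (Req_dec (c w l) 0) as [->|Hcl];
                      [ring|exfalso; apply Hall; eauto])).
      ring. }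
    lra.
Qed.

Definition perturb (s : R) (d : nat -> R) : nat -> nat -> R :=
  fun k l => A k l + s * rsum n (fun i => d i * W i k * rsum n (fun p => W i p * A p l)).

Lemma perturb_apply s d w k :
  mat_zvec n (perturb s d) w k = mat_zvec n A w k + s * rsum n (fun i => d i * c w i * W i k).
Proof.
  unfold mat_zvec at 1, perturb.
  rewrite (rsum_ext n _ (fun l => A k l * IZR (w l) + s *
    rsum n (fun i => d i * W i k * rsum n (fun p => W i p * A p l) * IZR (w l))))
    by (intros; rewrite rsum_scal_r; ring).
  rewrite rsum_plus, rsum_scal, rsum_swap. do 2 f_equal. apply rsum_ext. intros i _.
  rewrite (rsum_ext n _ (fun l => d i * W i k * rsum n (fun p => W i p * A p l * IZR (w l))))
    by (intros; rewrite rsum_scal_r; ring).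
  rewrite rsum_scal, rsum_swap. unfold coord, matvec, mat_zvec.
  rewrite (rsum_ext n (fun p => rsum n (fun l => W i p * A p l * IZR (w l)))
             (fun p => W i p * rsum n (fun l => A p l * IZR (w l))))
    by (intros; rewrite <- rsum_scal; apply rsum_ext; intros; ring).
  ring.
Qed.

Lemma perturb_sq s d w : sq n (mat_zvec n (perturb s d) w) =
  sq n (mat_zvec n A w) + 2 * s * rsum n (fun i => d i * c w i ^ 2)
  + s ^ 2 * sq n (fun k => rsum n (fun i => d i * c w i * W i k)).
Proof.
  rewrite (sq_ext n _ (fun k => mat_zvec n A w k + s * rsum n (fun i => d i * c w i * W i k)))
    by (intros; apply perturb_apply).
  rewrite sq_add. do 3 f_equal. unfold dot.
  rewrite (rsum_ext n _ (fun k => rsum n (fun i => d i * c w i * (W i k * mat_zvec n A w k))))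
    by (intros; rewrite <- rsum_scal; apply rsum_ext; intros; ring).
  rewrite rsum_swap. apply rsum_ext. intros i _.
  rewrite rsum_scal. unfold coord, matvec. ring.
Qed.
Definition perturb_bound : R :=
  rsum n (fun i => rsum n (fun k => Rabs (W i k)) *
                   rsum n (fun l => Rabs (rsum n (fun p => W i p * A p l)))).

Lemma perturb_close s d k l : 0 <= s -> (forall i, (i < n)%nat -> 0 <= d i <= 1) ->
  (k < n)%nat -> (l < n)%nat -> Rabs (perturb s d k l - A k l) <= s * perturb_bound.
Proof.
  intros Hs Hd Hk Hl. unfold perturb.
  replace (A k l + _ - A k l) with (s * rsum n (fun i => d i * W i k * rsum n (fun p => W i p * A p l)))
    by ring.
  rewrite Rabs_mult, (Rabs_right s) by lra. apply Rmult_le_compat_l; [exact Hs|].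
  eapply Rle_trans; [apply rsum_abs|]. apply rsum_le. intros i Hi.
  specialize (Hd i Hi). rewrite !Rabs_mult, (Rabs_right (d i)) by lra.
  assert (Rabs (W i k) <= rsum n (fun k => Rabs (W i k)))
    by (apply (rsum_term_le n (fun k => Rabs (W i k))); [intros; apply Rabs_pos|exact Hk]).
  assert (Rabs (rsum n (fun p => W i p * A p l)) <=
          rsum n (fun l => Rabs (rsum n (fun p => W i p * A p l))))
    by (apply (rsum_term_le n (fun l => Rabs (rsum n (fun p => W i p * A p l))));
        [intros; apply Rabs_pos|exact Hl]).
  pose proof (Rabs_pos (W i k)). pose proof (Rabs_pos (rsum n (fun p => W i p * A p l))).
  apply Rle_trans with (1 * Rabs (W i k) * Rabs (rsum n (fun p => W i p * A p l))).
  { apply Rmult_le_compat_r; [assumption|]. apply Rmult_le_compat_r; [assumption|lra]. }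
  rewrite Rmult_1_l. apply Rmult_le_compat; assumption.
Qed.

(** For [s > 0] small enough and the weights below, the shortest vectors of [B0] are
    exactly the [+-v_j]: they all have [|B0 v_j|^2 = m + 2 s], the other shortest
    vectors of [A] gain at least [2 s sum_i d_i c_i^2 > 2 s] since two of their
    coordinates have absolute value at least 1, and the remaining vectors already had
    [|A w|^2 >= m2 >= m + 4 s]. *)
Section SmallPerturbation.
Variable s : R.
Hypothesis Hs : 0 < s.
Hypothesis Hsa : forall i, (i < n)%nat -> s * sq n (W i) <= 1.
Hypothesis Hsgap : 4 * s <= m2 - m.

(* The weight [d_i], so that [s |W_i|^2 d_i^2 + 2 d_i = 2]. *)
Definition weight (i : nat) : R := 2 / (1 + sqrt (1 + 2 * (s * sq n (W i)))).

Lemma weight_bounds i : (i < n)%nat ->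
  1/2 < weight i <= 1 /\ s * sq n (W i) * weight i ^ 2 + 2 * weight i = 2.
Proof.
  intros Hi. apply weight_props. split; [|exact (Hsa i Hi)].
  apply Rmult_le_pos; [lra|apply sq_nonneg].
Qed.

Local Notation B0 := (perturb s weight).

Lemma perturb_basis j : (j < n)%nat -> sq n (mat_zvec n B0 (v j)) = m + 2 * s.
Proof.
  intros Hj. rewrite perturb_sq, (rb_basis_min _ _ _ _ _ _ Hrb j Hj).
  assert (Hdj : forall i, (i < n)%nat -> i <> j -> c (v j) i = 0)
    by (intros i Hi Hij; rewrite coord_basis by assumption; unfold delta;
        destruct (Nat.eqb_spec i j); [lia|reflexivity]).
  assert (Hjj : c (v j) j = 1)
    by (rewrite coord_basis by assumption; unfold delta; rewrite Nat.eqb_refl; reflexivity).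
  rewrite (rsum_single n _ j Hj) by (intros i Hi Hij; rewrite Hdj by assumption; ring).
  rewrite (sq_ext n _ (fun k => weight j * W j k)); last first.
  { intros k _. rewrite (rsum_single n _ j Hj) by (intros i Hi Hij; rewrite Hdj by assumption; ring).
    rewrite Hjj. ring. }
  rewrite sq_scal, Hjj. destruct (weight_bounds j Hj) as [_ Hw].
  replace (m + 2 * s * (weight j * 1 ^ 2) + s ^ 2 * (weight j ^ 2 * sq n (W j)))
    with (m + s * (s * sq n (W j) * weight j ^ 2 + 2 * weight j)) by ring.
  rewrite Hw. ring.
Qed.

Lemma perturb_pm w : (exists j, (j < n)%nat /\ (zeq n w (v j) \/ zeq n w (fun k => (- v j k)%Z))) ->
  znonzero n w /\ sq n (mat_zvec n B0 w) = m + 2 * s.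
Proof.
  intros [j [Hj [H|H]]]; pose proof (rb_basis_nonzero _ _ _ _ _ _ Hrb j Hj) as [k [Hk Hvk]].
  - split; [exists k; split; [exact Hk|rewrite H; assumption]|].
    rewrite (sq_zeq n B0 w (v j) H). apply perturb_basis. exact Hj.
  - split; [exists k; split; [exact Hk|rewrite H by exact Hk; lia]|].
    rewrite (sq_zeq n B0 w _ H), <- (perturb_basis j Hj), <- (Rmult_1_l (sq n (mat_zvec n B0 (v j)))).
    replace 1 with ((-1) ^ 2) by ring. rewrite <- sq_scal.
    apply sq_ext. intros l _. rewrite mat_zvec_opp. ring.
Qed.

Lemma perturb_others w : znonzero n w ->
  ~ (exists j, (j < n)%nat /\ (zeq n w (v j) \/ zeq n w (fun k => (- v j k)%Z))) ->
  m + 2 * s < sq n (mat_zvec n B0 w).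
Proof.
  intros Hw Hnot.
  assert (Hnn : forall i, (i < n)%nat -> 0 <= weight i * c w i ^ 2)
    by (intros i Hi; destruct (weight_bounds i Hi) as [[H1 _] _]; nra).
  assert (Hge : sq n (mat_zvec n A w) + 2 * s * rsum n (fun i => weight i * c w i ^ 2)
                <= sq n (mat_zvec n B0 w))
    by (rewrite perturb_sq; pose proof (sq_nonneg n (fun k => rsum n (fun i => weight i * c w i * W i k))); nra).
  pose proof (rsum_nonneg n _ Hnn) as Hsum.
  destruct (Req_dec (sq n (mat_zvec n A w)) m) as [Em|Em].
  - destruct (shortest_vector_coords w Hw Em) as [E|[i [j [Hi [Hj [Hij [Hci Hcj]]]]]]];
      [contradiction|].
    pose proof (rb_coord _ _ _ _ _ _ Hrb w Hw Em i Hi Hci) as Hi1.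
    pose proof (rb_coord _ _ _ _ _ _ Hrb w Hw Em j Hj Hcj) as Hj1.
    assert (1 <= c w i ^ 2) by (rewrite <- (pow2_abs (c w i)); nra).
    assert (1 <= c w j ^ 2) by (rewrite <- (pow2_abs (c w j)); nra).
    pose proof (rsum_two_le n _ i j Hnn Hi Hj Hij).
    destruct (weight_bounds i Hi) as [[Hdi _] _]. destruct (weight_bounds j Hj) as [[Hdj _] _].
    assert (Hgt : 1 < rsum n (fun i => weight i * c w i ^ 2)) by nra.
    assert (s * 1 < s * rsum n (fun i => weight i * c w i ^ 2)) by (apply Rmult_lt_compat_l; lra).
    lra.
  - pose proof (rb_gap _ _ _ _ _ _ Hrb w Hw Em).
    assert (0 <= s * rsum n (fun i => weight i * c w i ^ 2)) by (apply Rmult_le_pos; lra).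
    lra.
Qed.

Lemma S1_perturb w : in_S1 n B0 w <->
  exists j, (j < n)%nat /\ (zeq n w (v j) \/ zeq n w (fun k => (- v j k)%Z)).
Proof.
  split.
  - intros [Hw Hmin]. apply NNPP. intros Hnot.
    pose proof (perturb_others w Hw Hnot).
    pose proof (proj1 (norm_le_iff _ _ _) (Hmin (v 0%nat) (rb_basis_nonzero _ _ _ _ _ _ Hrb 0%nat Hn))).
    rewrite perturb_basis in * by exact Hn. lra.
  - intros E. destruct (perturb_pm w E) as [Hw Hsq]. split; [exact Hw|].
    intros w' Hw'. apply norm_le_iff. rewrite Hsq.
    destruct (classic (exists j, (j < n)%nat /\ (zeq n w' (v j) \/ zeq n w' (fun k => (- v j k)%Z))))
      as [E'|E'].
    + right. symmetry. apply perturb_pm. exact E'.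
    + left. apply perturb_others; assumption.
Qed.
End SmallPerturbation.
Lemma small_step_exists t : 0 < t -> exists s, 0 < s /\
  (forall i, (i < n)%nat -> s * sq n (W i) <= 1) /\ 4 * s <= m2 - m /\ s * perturb_bound < t.
Proof.
  intros Ht. pose proof (rb_gap_pos _ _ _ _ _ _ Hrb) as Hm2.
  set (C := perturb_bound).
  assert (HC : 0 <= C)
    by (apply rsum_nonneg; intros; apply Rmult_le_pos; apply rsum_nonneg; intros; apply Rabs_pos).
  set (Sa := rsum n (fun i => sq n (W i))).
  assert (HSa : forall i, (i < n)%nat -> 0 <= sq n (W i) <= Sa)
    by (intros i Hi; split; [apply sq_nonneg|apply (rsum_term_le n (fun i => sq n (W i)));
          [intros; apply sq_nonneg|exact Hi]]).
  assert (HSa0 : 0 <= Sa) by (destruct (HSa 0%nat Hn); lra).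
  destruct (pos_below (/ (1 + Sa)) ((m2 - m) / 4) (t / (2 * (C + 1)))) as [s [Hs [Hs1 [Hs2 Hs3]]]];
    [apply Rinv_0_lt_compat; lra|lra|apply Rdiv_lt_0_compat; lra|].
  exists s. split; [exact Hs|split; [|split; [lra|]]].
  - intros i Hi. destruct (HSa i Hi).
    apply Rle_trans with (/ (1 + Sa) * (1 + Sa)); [|rewrite Rinv_l by lra; lra].
    apply Rmult_le_compat; lra.
  - apply Rle_lt_trans with (t / (2 * (C + 1)) * (C + 1)); [apply Rmult_le_compat; lra|].
    replace (t / (2 * (C + 1)) * (C + 1)) with (t / 2) by (field; lra). lra.
Qed.

Lemma perturbation_result eps : 0 < eps -> exists B,
  det n B = 1 /\ well_rounded n B /\
  (forall i j, (i < n)%nat -> (j < n)%nat -> Rabs (B i j - A i j) < eps) /\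
  (forall w, in_S1 n B w <->
     exists j, (j < n)%nat /\ (zeq n w (v j) \/ zeq n w (fun k => (- v j k)%Z))).
Proof.
  intros Heps. pose proof (entry_bound_ge1 n A) as HK. set (K := entry_bound n A) in *.
  (* the thresholds: continuity of [det] at [A], then the size of [B0 - A] *)
  set (eta := Rmin (1/2) (eps / (4 * K))).
  assert (Heta : 0 < eta) by (apply Rmin_pos; [lra|apply Rdiv_lt_0_compat; lra]).
  pose proof (Rmin_l (1/2) (eps / (4 * K))) as Heta1.
  pose proof (Rmin_r (1/2) (eps / (4 * K))) as Heta2. fold eta in Heta1, Heta2.
  destruct (det_continuous n A eta Heta) as [del [Hdel Hcont]].
  pose proof (Rmin_l del (Rmin (eps / 2) 1)). pose proof (Rmin_r del (Rmin (eps / 2) 1)).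
  pose proof (Rmin_l (eps / 2) 1). pose proof (Rmin_r (eps / 2) 1).
  assert (Ht : 0 < Rmin del (Rmin (eps / 2) 1)) by (apply Rmin_pos; [exact Hdel|apply Rmin_pos; lra]).
  set (t := Rmin del (Rmin (eps / 2) 1)) in *.
  destruct (small_step_exists t Ht) as [s [Hs [Hsa [Hsgap HsC]]]].
  set (B0 := perturb s (weight s)).
  assert (Hclose : forall k l, (k < n)%nat -> (l < n)%nat -> Rabs (B0 k l - A k l) < t).
  { intros k l Hk Hl. eapply Rle_lt_trans; [apply perturb_close; auto; [lra|]|exact HsC].
    intros i Hi. destruct (weight_bounds s Hs Hsa i Hi) as [[? ?] _]. lra. }
  assert (HdetB0 : Rabs (det n B0 - 1) < eta).
  { rewrite <- HdetA. apply Hcont. intros i j Hi Hj. specialize (Hclose i j Hi Hj). lra. }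
  destruct (normalize_det n B0 Hn) as [lam [Hlam [HdetB Hlam1]]];
    [apply Rabs_def2 in HdetB0; lra|].
  exists (fun i j => lam * B0 i j). split; [exact HdetB|split; [|split]].
  - apply (well_rounded_of_basis n _ v (rb_basis_indep _ _ _ _ _ _ Hrb)).
    intros j Hj. apply in_S1_scale; [exact Hlam|]. apply S1_perturb; try assumption.
    exists j. split; [exact Hj|]. left. intros k _. reflexivity.
  - intros i j Hi Hj. specialize (Hclose i j Hi Hj).
    apply (scaled_close _ _ _ K); [apply entry_bound_le; assumption|lra|lra|].
    apply Rle_trans with (eps / (2 * K) * K); [apply Rmult_le_compat_r; [lra|]|right; field; lra].
    replace (eps / (2 * K)) with (2 * (eps / (4 * K))) by (field; lra). lra.
  - intros w. rewrite in_S1_scale by exact Hlam. apply S1_perturb; assumption.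
Qed.
End Perturbation.

Theorem mainTheorem5 :
  forall (n : nat) (A : nat -> nat -> R),
    det n A = 1 -> well_rounded n A ->
    forall eps : R, 0 < eps ->
    exists B : nat -> nat -> R,
      det n B = 1 /\ well_rounded n B /\
      (forall i j, (i < n)%nat -> (j < n)%nat -> Rabs (B i j - A i j) < eps) /\
      exists v : nat -> nat -> Z,
        lin_indep n v /\
        forall w : nat -> Z,
          in_S1 n B w <->
          exists i, (i < n)%nat /\ (zeq n w (v i) \/ zeq n w (fun k => (- v i k)%Z)).
Proof.
  intros n A HdetA HWR eps Heps.
  destruct n as [|n].
  - (* in dimension 0 there are no non-zero vectors at all *)
    exists A. split; [exact HdetA|split; [exact HWR|split; [intros; lia|]]].
    exists (fun _ _ => 0%Z). split; [intros c _ i Hi; lia|].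
    intros w. split; [intros [[k [Hk _]] _]; lia|intros [i [Hi _]]; lia].
  - destruct (reduced_basis_exists (S n) A ltac:(lia) HdetA HWR) as [m [m2 [v [W Hrb]]]].
    destruct (perturbation_result (S n) A W v m m2 ltac:(lia) HdetA Hrb eps Heps)
      as [B [HdetB [HWRB [Hclose HS1]]]].
    exists B. split; [exact HdetB|split; [exact HWRB|split; [exact Hclose|]]].
    exists v. split; [exact (lin_indep_of_det (S n) v (rb_basis_indep _ _ _ _ _ _ Hrb))|exact HS1].
Qed.
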